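(* Suppose $S \subset \mathbb{R}^2$ is compact, with both $S$ and $S^\mathsf{c}$ satisfying the $r$-rolling condition. There are constants $A_0,A_1 > 0$ depending only on $r$ and $\operatorname{diam}(S)$ such that $|\mathcal{E}(\partial S)|\leq A_0$ and $\lambda (\partial S) \leq A_1$.
   Context: A set $T\subset\mathbb{R}^2$ satisfies the $r$-rolling condition ($r>0$) if for every $x \in \partial T$ there is an open ball $B$ of radius $r$ with $B \cap T = \emptyset$ and $x \in \partial B$. $S^\mathsf{c}=\mathbb{R}^2\setminus S$, $\operatorname{diam}(S)=\sup\{\|x-y\|:x,y\in S\}$. $\mathcal{E}(T)$ denotes the Euler–Poincaré characteristic of $T$, and $\lambda$ the one-dimensional Hausdorff measure (length) on $\mathbb{R}^2$. *)

From HB Require Import structures.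
From mathcomp Require Import all_boot all_order all_algebra.
From mathcomp Require Import all_classical all_reals all_analysis.
Set Implicit Arguments. Unset Strict Implicit. Unset Printing Implicit Defensive.
Import Order.TTheory GRing.Theory Num.Theory.
Import numFieldNormedType.Exports.
Local Open Scope classical_set_scope.
Local Open Scope ring_scope.
Local Open Scope card_scope.

(* The plane R^2 is modelled as R * R with its product topology (which is the
   Euclidean topology); the Euclidean distance is written out explicitly. *)
Section Plane.
Variable R : realType.
Local Notation plane := (R * R)%type.

Definition eucl (x y : plane) : R :=
  Num.sqrt ((x.1 - y.1) ^+ 2 + (x.2 - y.2) ^+ 2).

Definition eball (c : plane) (r : R) : set plane := [set y | eucl c y < r].

Definition boundary (T : set plane) : set plane := closure T `\` interior T.

Definition diam (S : set plane) : \bar R :=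
  ereal_sup [set (eucl x y)%:E | x in S & y in S].

Definition rolling (r : R) (T : set plane) : Prop :=
  forall x, boundary T x ->
    exists c : plane, eball c r `&` T = set0 /\ eucl c x = r.

Definition hausdorff1_delta (delta : R) (A : set plane) : \bar R :=
  ereal_inf [set (\sum_(0 <= i <oo) maxe 0%E (diam (U i)))%E
            | U in [set U : nat -> set plane |
                     A `<=` \bigcup_i U i /\ forall i, (diam (U i) <= delta%:E)%E]].

Definition hausdorff1 (A : set plane) : \bar R :=
  ereal_sup [set hausdorff1_delta delta A | delta in [set delta : R | 0 < delta]].

Definition bounded_plane (C : set plane) : Prop :=
  exists M : R, forall x, C x -> eucl (0, 0) x <= M.

(* Euler–Poincaré characteristic of a planar set T (with finitely many
   components and holes): number of connected components of T minus the
   number of bounded connected components of its complement. *)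
Definition euler_char (T : set plane) (e : int) : Prop :=
  exists n m : nat,
    [set connected_component T x | x in T] #= `I_n /\
    [set C | exists2 x, (~` T) x & C = connected_component (~` T) x
                                  /\ bounded_plane C] #= `I_m /\
    e = (n%:Z - m%:Z)%R.
End Plane.
Notation plane R := (R * R)%type.

From HB Require Import structures.
From mathcomp Require Import all_boot all_order all_algebra.
From mathcomp Require Import all_classical all_reals all_analysis.
From mathcomp Require Import ring lra zify.
Import Order.TTheory GRing.Theory Num.Theory.
Import numFieldNormedType.Exports.
Local Open Scope classical_set_scope.
Local Open Scope ring_scope.
Local Open Scope card_scope.
Set Implicit Arguments. Unset Strict Implicit. Unset Printing Implicit Defensive.

(* The two rolling conditions give, at every boundary point x, a vector v of
   length r such that the open r-balls about x + v and x - v lie in the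
   complement and in the interior of S.  Comparing these balls at boundary
   points within distance r/8 of a boundary point z shows that their normals
   make a small angle, so that near z the boundary is the graph of a
   1-Lipschitz function over the tangent line at z, with the interior of S
   below and the complement above.  Hence boundary points within r/8 of each
   other lie in the same boundary component, and a bounded component of the
   complement of the boundary is determined by a boundary point within r/8 of
   it together with a side, so that boundary points in the same cell of a grid
   of mesh r/64 determine the same components.  As S lies in a square of side
   2 diam S, this bounds the Euler characteristic of the boundary in terms of
   diam S / r; cutting the same graphs into short arcs covers the boundary by
   sets of total diameter at most r/2 times the number of cells. *)

Lemma card_II_le_of_inj {T} (X : set T) (f : T -> nat) (K : nat) :
  (forall x, X x -> (f x < K)%N) ->
  (forall x y, X x -> X y -> f x = f y -> x = y) ->
  exists n, X #= `I_n /\ (n <= K)%N.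
Proof.
move=> fK finj.
have XK : X #<= `I_K.
  apply/pcard_leP/injfunPex; exists f; first by move=> x /fK.
  by move=> x y; rewrite !in_setE; exact: finj.
have [n Xn] : finite_set X := card_le_finite XK (finite_II K).
exists n; split => //; rewrite -card_le_II; apply: card_le_trans XK.
by move: Xn; rewrite card_eq_le => /andP[].
Qed.

Lemma nneseries_le_finite (R : realType) (u : nat -> \bar R) (K : nat) (c : R) :
  (forall i, (0 <= u i)%E) -> (forall i, (K <= i)%N -> u i = 0%E) ->
  (forall i, (u i <= c%:E)%E) ->
  (\sum_(0 <= i <oo) u i <= (K%:R * c)%:E)%E.
Proof.
move=> u0 uK uc.
rewrite (@nneseries_split R u 0 K); last by move=> k _; exact: u0.
rewrite add0n eseries0 ?adde0; last by move=> i Ki _; exact: uK.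
apply: (@le_trans _ _ (\sum_(0 <= i < K) c%:E)%E); first by apply: lee_sum => i _.
by rewrite sumEFin lee_fin sumr_const_nat subn0 mulr_natl.
Qed.

Lemma eq_mixed_radix (a b a' b' N : nat) : (b < N)%N -> (b' < N)%N ->
  (a * N + b = a' * N + b')%N -> a = a' /\ b = b'.
Proof.
move=> bN b'N e.
have eb : b = b' by have := congr1 (modn^~ N) e; rewrite !modnMDl !modn_small.
have N0 : (0 < N)%N := leq_ltn_trans (leq0n b) bN.
by split => //; move/eqP: e; rewrite eb eqn_add2r eqn_pmul2r // => /eqP.
Qed.

Section Grid.
Variables (R : archiRealFieldType) (D s : R).
Hypothesis s0 : 0 < s.

Definition cell (c : R) : nat := Num.truncn ((c + D) / s).
Definition ncells : nat := (Num.truncn ((D + D) / s)).+1.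

Lemma cell_lt c : `|c| <= D -> (cell c < ncells)%N.
Proof.
rewrite ler_norml => /andP[c1 c2]; rewrite /cell /ncells ltnS; apply: le_truncn.
by rewrite ler_pM2r ?invr_gt0 //; lra.
Qed.

Lemma cell_eq_dist c c' : `|c| <= D -> `|c'| <= D -> cell c = cell c' -> `|c - c'| < s.
Proof.
rewrite !ler_norml => /andP[c1 c2] /andP[c'1 c'2] e.
have cD : 0 <= (c + D) / s by rewrite divr_ge0 //; [lra | exact: ltW].
have c'D : 0 <= (c' + D) / s by rewrite divr_ge0 //; [lra | exact: ltW].
have /andP[a1 a2] := truncn_itv cD; have /andP[b1 b2] := truncn_itv c'D.
rewrite -/(cell c) e -natr1 in a1 a2; rewrite -/(cell c') -natr1 in b1 b2.
rewrite !ler_pdivlMr // in a1 b1; rewrite !ltr_pdivrMr // in a2 b2.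
by rewrite ltr_norml; apply/andP; split; nra.
Qed.
End Grid.

Section SquareBounds.
Variable R : realFieldType.
Implicit Types a b c : R.

Lemma sqr_le_of_norm_le a c : `|a| <= c -> a ^+ 2 <= c ^+ 2.
Proof.
move=> ac; rewrite -real_normK ?num_real // ler_pXn2r // nnegrE //.
exact: le_trans ac.
Qed.

Lemma norm_le_of_sqr_le a c : 0 <= c -> a ^+ 2 <= c ^+ 2 -> `|a| <= c.
Proof. by move=> c0; rewrite -real_normK ?num_real // ler_pXn2r ?nnegrE. Qed.

(* Used with [W = |x - x0|^2], [A] and [B] the components of [x - x0] along the
   rotated normal and the normal [v0] at [x0], [E] the component of [x0 - x]
   along the normal [v] at [x], and [beta], [c] the dot and cross products of
   [v0] and [v], both of length [r]. *)
Lemma cross_sqr_le (r W A B E beta c : R) :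
  0 < r -> 0 < W -> W <= 2 * r ^+ 2 ->
  A ^+ 2 + B ^+ 2 = r ^+ 2 * W -> 2 * `|B| <= W -> 2 * `|E| <= W ->
  beta ^+ 2 + c ^+ 2 = r ^+ 4 -> A * c + B * beta = - (r ^+ 2 * E) ->
  c ^+ 2 <= 2 * r ^+ 2 * W.
Proof.
move=> r0 W0 Wr AB BW EW betac Ac.
have r2 : 0 < r ^+ 2 by rewrite exprn_gt0.
have betar : `|beta| <= r ^+ 2.
  apply: norm_le_of_sqr_le; first exact: ltW.
  have -> : (r ^+ 2) ^+ 2 = r ^+ 4 by rewrite -exprM.
  have := sqr_ge0 c; lra.
have AcW : `|A * c| <= r ^+ 2 * W.
  rewrite (_ : A * c = - (r ^+ 2 * E) - B * beta); last lra.
  apply: le_trans (ler_normB _ _) _; rewrite normrN normrM (gtr0_norm r2) normrM.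
  have : r ^+ 2 * `|E| <= r ^+ 2 * (W / 2) by rewrite ler_pM2l //; lra.
  have : `|B| * `|beta| <= W / 2 * r ^+ 2 by apply: ler_pM => //; lra.
  lra.
have A2 : r ^+ 2 * W / 2 <= A ^+ 2.
  have : B ^+ 2 <= (W / 2) ^+ 2 by apply: sqr_le_of_norm_le; lra.
  have : W * (W / 4) <= W * (r ^+ 2 / 2) by rewrite ler_pM2l //; lra.
  rewrite expr_div_n; lra.
have rW2 : 0 < r ^+ 2 * W / 2 by rewrite divr_gt0 ?mulr_gt0.
rewrite -(ler_pM2r rW2) (_ : 2 * r ^+ 2 * W * _ = (r ^+ 2 * W) ^+ 2); last by field.
apply: le_trans (_ : c ^+ 2 * A ^+ 2 <= _); first by rewrite ler_wpM2l ?sqr_ge0.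
by rewrite -exprMn mulrC; exact: sqr_le_of_norm_le.
Qed.

(* Used with [U = |y - x|^2], [D] and [T] the components of [y - x] along the
   normal at [x0] and its rotation, [al] and [ga] those along the normal at [x],
   and [beta], [c] as in [cross_sqr_le]. *)
Lemma normal_sqr_le_tangent (r U al ga beta c D T : R) :
  0 < r -> 0 <= U -> U <= r ^+ 2 / 8 ->
  al ^+ 2 + ga ^+ 2 = r ^+ 2 * U -> 2 * `|al| <= U ->
  beta ^+ 2 + c ^+ 2 = r ^+ 4 -> c ^+ 2 <= r ^+ 4 / 16 ->
  r ^+ 2 * D = al * beta - ga * c -> D ^+ 2 + T ^+ 2 = r ^+ 2 * U ->
  D ^+ 2 <= T ^+ 2.
Proof.
move=> r0 U0 Ur alga alU betac cr Dab DT.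
have r4 : 0 < r ^+ 4 by rewrite exprn_gt0.
have al2 : al ^+ 2 <= (U / 2) ^+ 2 by apply: sqr_le_of_norm_le; lra.
have beta2 : beta ^+ 2 <= r ^+ 4 by have := sqr_ge0 c; lra.
have ga2 : ga ^+ 2 <= r ^+ 2 * U by have := sqr_ge0 al; lra.
have D2 : r ^+ 4 * D ^+ 2 <= r ^+ 4 * (U ^+ 2 / 2 + r ^+ 2 * U / 8).
  have -> : r ^+ 4 * D ^+ 2 = (r ^+ 2 * D) ^+ 2 by rewrite exprMn -exprM.
  have albeta : (al * beta) ^+ 2 <= (U / 2) ^+ 2 * r ^+ 4.
    by rewrite exprMn ler_pM ?sqr_ge0.
  have gac : (ga * c) ^+ 2 <= r ^+ 2 * U * (r ^+ 4 / 16).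
    by rewrite exprMn ler_pM ?sqr_ge0.
  have := sqr_ge0 (al * beta + ga * c).
  have -> : r ^+ 4 * (U ^+ 2 / 2 + r ^+ 2 * U / 8) =
    2 * ((U / 2) ^+ 2 * r ^+ 4) + 2 * (r ^+ 2 * U * (r ^+ 4 / 16)) by field.
  have -> : (al * beta + ga * c) ^+ 2 =
    2 * (al * beta) ^+ 2 + 2 * (ga * c) ^+ 2 - (r ^+ 2 * D) ^+ 2 by rewrite Dab; ring.
  lra.
rewrite ler_pM2l // in D2.
have : U * U <= U * (r ^+ 2 / 8) by rewrite ler_wpM2l.
rewrite -expr2; lra.
Qed.

End SquareBounds.

Section Clamp.
Variables (R : realFieldType) (m : R).

Definition clamp (s : R) : R := if s < - m then - m else if m < s then m else s.

Lemma clamp_le s : 0 <= m -> `|clamp s| <= m.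
Proof.
move=> m0; rewrite /clamp ler_norml.
by case: (ltrP s (- m)) => ?; case: (ltrP m s) => ?; apply/andP; split; lra.
Qed.

Lemma clamp_id s : `|s| <= m -> clamp s = s.
Proof.
rewrite ler_norml /clamp => /andP[? ?].
by case: (ltrP s (- m)) => ?; case: (ltrP m s) => ? //; lra.
Qed.

Lemma clamp_lipschitz s t : 0 <= m -> `|clamp s - clamp t| <= `|s - t|.
Proof.
move=> m0; have := ler_norm (s - t); have := ler_norm (t - s).
rewrite distrC /clamp ler_norml.
by case: (ltrP s (- m)) => ?; case: (ltrP m s) => ?; case: (ltrP t (- m)) => ?;
  case: (ltrP m t) => ? ? ?; apply/andP; split; lra.
Qed.
End Clamp.

Lemma near_first_hit (R : realType) (P : R -> Prop) (e : R) : 0 < e -> ~ P 0 ->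
  (exists2 t, 0 <= t & P t) ->
  exists t0 t1, [/\ 0 <= t0, t0 <= t1, t1 - t0 <= 2 * e, P t1
                  & forall t, 0 <= t <= t0 -> ~ P t].
Proof.
move=> e0 nP0 [t t0 Pt].
pose Z := [set s | 0 <= s /\ P s].
have lbZ : has_lbound Z by exists 0 => s [].
have [t1 [t10 Pt1] t1Z] := inf_adherent e0 (conj (ex_intro _ t (conj t0 Pt)) lbZ : has_inf Z).
have Zt1 : inf Z <= t1 := ge_inf lbZ (conj t10 Pt1).
have Z0 : 0 <= inf Z by apply: lb_le_inf => [|s []]; first by exists t.
exists (Num.max 0 (inf Z - e)), t1; split => //.
- by rewrite le_max lexx.
- by rewrite ge_max t10 /=; lra.
- have : inf Z - e <= Num.max 0 (inf Z - e) by rewrite le_max lexx orbT.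
  lra.
move=> s /andP[s0]; rewrite le_max => /orP[s_le0 | sZ] Ps.
  by apply: nP0; rewrite (_ : 0 = s) //; apply/eqP; rewrite eq_le s0 s_le0.
by have := ge_inf lbZ (conj s0 Ps); lra.
Qed.

Lemma in_itvcc (R : numDomainType) (a b t : R) : t \in `[a, b] <-> a <= t <= b.
Proof. by rewrite in_itv. Qed.

Lemma open_disjoint_separated (T : topologicalType) (A B : set T) :
  open A -> open B -> A `&` B = set0 -> separated A B.
Proof.
move=> oA oB AB; split; apply/seteqP; split => // x [].
  move=> clAx Bx; have [y [Ay By]] := clAx B (open_nbhs_nbhs (conj oB Bx)).
  by have : (A `&` B) y by []; rewrite AB.
move=> Ax clBx; have [y [By Ay]] := clBx A (open_nbhs_nbhs (conj oA Ax)).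
by have : (A `&` B) y by []; rewrite AB.
Qed.

Section Plane.
Variable R : realType.
Implicit Types (x y z : plane R) (S : set (plane R)).

Definition dist2 x y : R := (x.1 - y.1) ^+ 2 + (x.2 - y.2) ^+ 2.

Lemma dist2_ge0 x y : 0 <= dist2 x y.
Proof. by rewrite addr_ge0 ?sqr_ge0. Qed.

Lemma dist2C x y : dist2 x y = dist2 y x.
Proof. rewrite /dist2; ring. Qed.

Lemma dist2_triangle x y z : dist2 x z <= 2 * dist2 x y + 2 * dist2 y z.
Proof.
rewrite /dist2; have := sqr_ge0 (x.1 - 2 * y.1 + z.1).
have := sqr_ge0 (x.2 - 2 * y.2 + z.2); nra.
Qed.

Lemma eucl_ge0 x y : 0 <= eucl x y.
Proof. exact: sqrtr_ge0. Qed.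

Lemma sqr_eucl x y : eucl x y ^+ 2 = dist2 x y.
Proof. by rewrite sqr_sqrtr // dist2_ge0. Qed.

Lemma eucl_ltE x y (e : R) : 0 <= e -> (eucl x y < e) = (dist2 x y < e ^+ 2).
Proof. by move=> e0; rewrite -sqr_eucl ltr_pXn2r // nnegrE eucl_ge0. Qed.

Lemma eucl_leE x y (e : R) : 0 <= e -> (eucl x y <= e) = (dist2 x y <= e ^+ 2).
Proof. by move=> e0; rewrite -sqr_eucl ler_pXn2r // nnegrE eucl_ge0. Qed.

Lemma cauchy_schwarz2 (u1 u2 w1 w2 : R) :
  u1 * w1 + u2 * w2 <= Num.sqrt (u1 ^+ 2 + u2 ^+ 2) * Num.sqrt (w1 ^+ 2 + w2 ^+ 2).
Proof.
rewrite -sqrtrM ?addr_ge0 ?sqr_ge0 //.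
have [|uw0] := lerP (u1 * w1 + u2 * w2) 0; first by move/le_trans; apply.
rewrite -(ger0_norm (ltW uw0)) -sqrtr_sqr ler_sqrt ?mulr_ge0 ?addr_ge0 ?sqr_ge0 //.
rewrite -subr_ge0 (_ : _ - _ = (u1 * w2 - u2 * w1) ^+ 2) ?sqr_ge0 //; ring.
Qed.

Lemma eucl_triangle x y z : eucl x z <= eucl x y + eucl y z.
Proof.
rewrite eucl_leE ?addr_ge0 ?eucl_ge0 // sqrrD !sqr_eucl.
have -> : dist2 x z = dist2 x y +
    2 * ((x.1 - y.1) * (y.1 - z.1) + (x.2 - y.2) * (y.2 - z.2)) + dist2 y z.
  by rewrite /dist2; ring.
rewrite lerD2r lerD2l.
have := cauchy_schwarz2 (x.1 - y.1) (x.2 - y.2) (y.1 - z.1) (y.2 - z.2).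
by rewrite -/(eucl x y) -/(eucl y z); lra.
Qed.

Lemma norm_sub1_le_eucl x y : `|x.1 - y.1| <= eucl x y.
Proof.
rewrite -sqrtr_sqr ler_sqrt ?dist2_ge0 //; have := sqr_ge0 (x.2 - y.2).
by rewrite /dist2; lra.
Qed.

Lemma norm_sub2_le_eucl x y : `|x.2 - y.2| <= eucl x y.
Proof.
rewrite -sqrtr_sqr ler_sqrt ?dist2_ge0 //; have := sqr_ge0 (x.1 - y.1).
by rewrite /dist2; lra.
Qed.

Lemma eucl_le_norm_sub x y : eucl x y <= `|x.1 - y.1| + `|x.2 - y.2|.
Proof.
rewrite eucl_leE ?addr_ge0 // /dist2 -(real_normK (num_real (x.1 - y.1))).
rewrite -(real_normK (num_real (x.2 - y.2))).
have := normr_ge0 (x.1 - y.1); have := normr_ge0 (x.2 - y.2).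
move: `|x.1 - y.1| `|x.2 - y.2| => a b a0 b0; nra.
Qed.

Lemma open_eball z (e : R) : open (eball z e).
Proof.
rewrite openE => y; rewrite /eball /= => zy; apply: (proj2 (nbhs_normP y _)).
exists ((e - eucl z y) / 2) => [|w /=]; first by apply: divr_gt0; rewrite ?subr_gt0.
rewrite prod_normE /= gt_max => /andP[h1 h2]; rewrite /eball /=.
apply: le_lt_trans (eucl_triangle z y w) _.
apply: le_lt_trans (lerD (lexx _) (eucl_le_norm_sub y w)) _.
lra.
Qed.

Lemma boundary_closedE S x : closed S -> boundary S x <-> S x /\ ~ S° x.
Proof. by move=> cS; rewrite /boundary -(closure_id S).1. Qed.

Lemma boundary_setC S : closed S -> boundary (~` S) = boundary S.
Proof.
move=> cS; rewrite /boundary closure_setC interiorC -(closure_id S).1 //.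
apply/seteqP; split => x /= [Sx iSx]; first by split => //; apply: contrapT.
by split => // /iSx.
Qed.

Lemma connected_meets_boundary S C : closed S -> connected C ->
  (exists2 y, C y & S y) -> (exists2 y, C y & ~ S y) -> exists2 y, C y & boundary S y.
Proof.
move=> cS cC [y1 Cy1 Sy1] [y2 Cy2 nSy2]; apply: contrapT => noB.
have CS : C `<=` S° `|` ~` S.
  move=> y Cy; have [Sy|] := pselect (S y); last by right.
  have [|niSy] := pselect (S° y); first by left.
  by exfalso; apply: noB; exists y => //; apply/boundary_closedE.
have sep : separated S° (~` S).
  apply: open_disjoint_separated; [exact: open_interior | exact: closed_openC |].
  by apply/seteqP; split => // y [/interior_subset].
have [CSi|CSc] := connected_subset sep CS cC.
  by have /interior_subset := CSi _ Cy2.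
exact: CSc _ Cy1 Sy1.
Qed.

Lemma dist2_eq0 x y : dist2 x y = 0 -> x = y.
Proof.
rewrite /dist2 => xy; have := sqr_ge0 (x.1 - y.1); have := sqr_ge0 (x.2 - y.2) => ? ?.
have /eqP : (x.1 - y.1) ^+ 2 = 0 by lra.
have /eqP : (x.2 - y.2) ^+ 2 = 0 by lra.
rewrite !sqrf_eq0 !subr_eq0 => /eqP ? /eqP ?.
exact: injective_projections.
Qed.

Lemma midpoint_of_tangent_balls (c1 c2 x : plane R) (r : R) : 0 < r ->
  eucl c1 x = r -> eucl c2 x = r -> eball c1 r `&` eball c2 r = set0 ->
  c1.1 + c2.1 = 2 * x.1 /\ c1.2 + c2.2 = 2 * x.2.
Proof.
move=> r0 c1x c2x c12.
have far : 4 * r ^+ 2 <= dist2 c1 c2.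
  rewrite leNgt; apply/negP => near.
  pose m : plane R := ((c1.1 + c2.1) / 2, (c1.2 + c2.2) / 2).
  have m1 : dist2 c1 m = dist2 c1 c2 / 4 by rewrite /dist2 /=; field.
  have m2 : dist2 c2 m = dist2 c1 c2 / 4 by rewrite /dist2 /=; field.
  have : (eball c1 r `&` eball c2 r) m.
    by split; rewrite /eball /= eucl_ltE ?(ltW r0) // ?m1 ?m2; lra.
  by rewrite c12.
have d1 : dist2 c1 x = r ^+ 2 by rewrite -sqr_eucl c1x.
have d2 : dist2 c2 x = r ^+ 2 by rewrite -sqr_eucl c2x.
have : (c1.1 + c2.1 - 2 * x.1) ^+ 2 + (c1.2 + c2.2 - 2 * x.2) ^+ 2
    = 2 * dist2 c1 x + 2 * dist2 c2 x - dist2 c1 c2 by rewrite /dist2; ring.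
have := sqr_ge0 (c1.1 + c2.1 - 2 * x.1); have := sqr_ge0 (c1.2 + c2.2 - 2 * x.2).
by move=> ? ? ?; split; apply/eqP; rewrite -subr_eq0 -sqrf_eq0; apply/eqP; lra.
Qed.

Lemma diam_set0 : diam (@set0 (plane R)) = -oo%E.
Proof.
rewrite /diam (_ : [set _ | x in set0 & y in set0] = set0) ?ereal_sup0 //.
by apply/seteqP; split => // _ [x []].
Qed.

Lemma lipschitz_continuous_path (g : R -> plane R) (K : R) : 0 < K ->
  (forall s t, `|(g s).1 - (g t).1| <= K * `|s - t| /\
               `|(g s).2 - (g t).2| <= K * `|s - t|) -> continuous g.
Proof.
move=> K0 gK s; apply/cvgrPdist_lt => e e0; apply/nbhs_normP.
exists (e / K) => [|t /=]; first by apply: divr_gt0.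
move=> st; have [g1 g2] := gK s t.
have Kst : K * `|s - t| < e by rewrite mulrC -ltr_pdivlMr.
by rewrite prod_normE /= gt_max (le_lt_trans g1 Kst) (le_lt_trans g2 Kst).
Qed.

Lemma connected_lipschitz_image (g : R -> plane R) (K a b : R) : 0 < K ->
  (forall s t, `|(g s).1 - (g t).1| <= K * `|s - t| /\
               `|(g s).2 - (g t).2| <= K * `|s - t|) ->
  connected (g @` `[a, b]).
Proof.
move=> K0 gK; apply: connected_continuous_connected; first exact: segment_connected.
exact/continuous_subspaceT/(lipschitz_continuous_path K0 gK).
Qed.

End Plane.

Section RollingBoundary.
Variables (R : realType) (r : R) (S : set (plane R)).
Hypotheses (r0 : 0 < r) (cS : closed S) (rS : rolling r S) (rSc : rolling r (~` S)).
Implicit Types x y z v : plane R.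

(** * The normal at a boundary point *)

Definition outer_normal x v :=
  [/\ v.1 ^+ 2 + v.2 ^+ 2 = r ^+ 2,
      forall y, dist2 y (x.1 + v.1, x.2 + v.2) < r ^+ 2 -> ~ S y
    & forall y, dist2 y (x.1 - v.1, x.2 - v.2) < r ^+ 2 -> S° y].

Lemma boundary_in x : boundary S x -> S x.
Proof. by move/(boundary_closedE x cS) => []. Qed.

Lemma exists_outer_normal x : boundary S x -> exists v, outer_normal x v.
Proof.
move=> Bx; have [c1 [c1S c1x]] := rS Bx.
have [c2 [c2S c2x]] : exists c, eball c r `&` ~` S = set0 /\ eucl c x = r.
  by apply: rSc; rewrite boundary_setC.
have c2S' : eball c2 r `<=` S°.
  rewrite -(open_subsetE _ (@open_eball _ c2 r)) => y c2y; apply: contrapT => nSy.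
  by have : (eball c2 r `&` ~` S) y by []; rewrite c2S.
have [m1 m2] : c1.1 + c2.1 = 2 * x.1 /\ c1.2 + c2.2 = 2 * x.2.
  apply: (midpoint_of_tangent_balls r0 c1x c2x).
  apply/seteqP; split => // y [c1y /c2S' /interior_subset Sy].
  by have : (eball c1 r `&` S) y by []; rewrite c1S.
exists (c1.1 - x.1, c1.2 - x.2); split => [|y|y] /=.
- by rewrite -c1x sqr_eucl /dist2.
- rewrite (_ : (_, _) = c1); last by apply: injective_projections => /=; ring.
  move=> c1y Sy; have : (eball c1 r `&` S) y.
    by split => //; rewrite /eball /= eucl_ltE ?(ltW r0) // dist2C.
  by rewrite c1S.
rewrite (_ : (_, _) = c2); last by apply: injective_projections => /=; lra.
by move=> c2y; apply: c2S'; rewrite /eball /= eucl_ltE ?(ltW r0) // dist2C.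
Qed.

Definition normal x : plane R := xget (0, 0) [set v | outer_normal x v].

Lemma normalP x : boundary S x -> outer_normal x (normal x).
Proof.
move=> /exists_outer_normal [v xv]; rewrite /normal.
by case: xgetP => // /(_ v xv).
Qed.

Definition dotB y x v : R := (y.1 - x.1) * v.1 + (y.2 - x.2) * v.2.

Lemma boundary_dotB_normal x y : boundary S x -> boundary S y ->
  2 * `|dotB y x (normal x)| <= dist2 y x.
Proof.
move=> Bx By; have [vr vout vin] := normalP Bx; set v := normal x in vr vout vin *.
have [Sy niSy] := (boundary_closedE y cS).1 By.
have : r ^+ 2 <= dist2 y (x.1 + v.1, x.2 + v.2).
  by rewrite leNgt; apply/negP => /vout.
have : r ^+ 2 <= dist2 y (x.1 - v.1, x.2 - v.2).
  by rewrite leNgt; apply/negP => /vin.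
have -> : dist2 y (x.1 + v.1, x.2 + v.2) = dist2 y x - 2 * dotB y x v + r ^+ 2.
  by rewrite -vr /dist2 /dotB /=; ring.
have -> : dist2 y (x.1 - v.1, x.2 - v.2) = dist2 y x + 2 * dotB y x v + r ^+ 2.
  by rewrite -vr /dist2 /dotB /=; ring.
by have [d0|d0] := lerP 0 (dotB y x v); [rewrite ger0_norm | rewrite ltr0_norm]; lra.
Qed.

Definition rot90 v : plane R := (- v.2, v.1).

Let rho := r / 8.

Lemma rho_gt0 : 0 < rho.
Proof. by rewrite divr_gt0. Qed.

Lemma normal_cross_sqr_le x0 x : boundary S x0 -> boundary S x ->
  dist2 x x0 <= 2 * rho ^+ 2 ->
  ((normal x0).1 * (normal x).2 - (normal x0).2 * (normal x).1) ^+ 2 <= r ^+ 4 / 16.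
Proof.
move=> B0 Bx xx0; have [v0r _ _] := normalP B0; have [vxr _ _] := normalP Bx.
have [->|x_neq] := eqVneq x x0.
  by rewrite (_ : _ - _ = 0) ?expr0n ?divr_ge0 ?exprn_ge0 ?ltW //; ring.
have W0 : 0 < dist2 x x0.
  by rewrite lt_def dist2_ge0 andbT; apply: contra_neq x_neq; exact: dist2_eq0.
set v0 := normal x0 in v0r *; set vx := normal x in vxr *.
apply: (@le_trans _ _ (2 * r ^+ 2 * dist2 x x0)); last first.
  by rewrite /rho in xx0; have := exprn_gt0 2 r0; nra.
apply: (@cross_sqr_le _ r _ (dotB x x0 (rot90 v0)) (dotB x x0 v0) (dotB x0 x vx)
  (v0.1 * vx.1 + v0.2 * vx.2)) => //.
- by rewrite /rho in xx0; have := exprn_gt0 2 r0; nra.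
- by rewrite -v0r /dotB /rot90 /dist2 /=; ring.
- by rewrite -/v0 boundary_dotB_normal.
- by rewrite dist2C -/vx boundary_dotB_normal.
- have -> : r ^+ 4 = r ^+ 2 * r ^+ 2 by rewrite -exprD.
  by rewrite -{1}v0r -vxr; ring.
- by rewrite /dotB /rot90 /= -v0r; ring.
Qed.

Lemma boundary_slope_normal x0 x y : boundary S x0 -> boundary S x -> boundary S y ->
  dist2 x x0 <= 2 * rho ^+ 2 -> dist2 y x0 <= 2 * rho ^+ 2 ->
  dotB y x (normal x0) ^+ 2 <= dotB y x (rot90 (normal x0)) ^+ 2.
Proof.
move=> B0 Bx By xx0 yx0; have [v0r _ _] := normalP B0; have [vxr _ _] := normalP Bx.
have cross := normal_cross_sqr_le B0 Bx xx0.
set v0 := normal x0 in v0r cross *; set vx := normal x in vxr cross *.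
apply: (@normal_sqr_le_tangent _ r (dist2 y x) (dotB y x vx) (dotB y x (rot90 vx))
  (v0.1 * vx.1 + v0.2 * vx.2) (v0.1 * vx.2 - v0.2 * vx.1)) => //.
- exact: dist2_ge0.
- have := dist2_triangle y x0 x; rewrite (dist2C x0 x) /rho in xx0 yx0 *; lra.
- by rewrite -vxr /dotB /rot90 /dist2 /=; ring.
- by rewrite -/vx boundary_dotB_normal.
- have -> : r ^+ 4 = r ^+ 2 * r ^+ 2 by rewrite -exprD.
  by rewrite -{1}v0r -vxr; ring.
- by rewrite /dotB /rot90 /= -vxr; ring.
- by rewrite -v0r /dotB /rot90 /dist2 /=; ring.
Qed.

(** * The boundary as a Lipschitz graph in local charts *)

Definition unit_normal z : plane R := ((normal z).1 / r, (normal z).2 / r).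
Definition unit_tangent z : plane R := rot90 (unit_normal z).

Definition chart z (a b : R) : plane R :=
  (z.1 + a * (unit_tangent z).1 + b * (unit_normal z).1,
   z.2 + a * (unit_tangent z).2 + b * (unit_normal z).2).

Lemma unit_normal_sqr z : boundary S z ->
  (unit_normal z).1 ^+ 2 + (unit_normal z).2 ^+ 2 = 1.
Proof.
move=> Bz; have [vr _ _] := normalP Bz; rewrite /unit_normal /=.
by rewrite !expr_div_n -mulrDl vr divff // expf_neq0 // gt_eqF.
Qed.

Lemma dist2_chart z a b a' b' : boundary S z ->
  dist2 (chart z a b) (chart z a' b') = (a - a') ^+ 2 + (b - b') ^+ 2.
Proof.
move=> /unit_normal_sqr; rewrite /dist2 /chart /unit_tangent /rot90.
move: (unit_normal z) => [n1 n2] /= un.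
transitivity (((a - a') ^+ 2 + (b - b') ^+ 2) * (n1 ^+ 2 + n2 ^+ 2)); first ring.
by rewrite un mulr1.
Qed.

Lemma chart00 z : chart z 0 0 = z.
Proof. by rewrite /chart !mul0r !addr0; case: z. Qed.

Lemma chart_dotB z p : boundary S z ->
  p = chart z (dotB p z (unit_tangent z)) (dotB p z (unit_normal z)).
Proof.
move=> /unit_normal_sqr; rewrite /chart /dotB /unit_tangent /rot90.
move: (unit_normal z) => [n1 n2] /= un.
apply: injective_projections => /=.
  transitivity (z.1 + (p.1 - z.1) * (n1 ^+ 2 + n2 ^+ 2)); last ring.
  by rewrite un mulr1; ring.
transitivity (z.2 + (p.2 - z.2) * (n1 ^+ 2 + n2 ^+ 2)); last ring.
by rewrite un mulr1; ring.
Qed.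

Lemma dotB_chart_normal z a b a' b' : boundary S z ->
  dotB (chart z a b) (chart z a' b') (unit_normal z) = b - b'.
Proof.
move=> /unit_normal_sqr; rewrite /chart /dotB /unit_tangent /rot90.
move: (unit_normal z) => [n1 n2] /= un.
transitivity ((b - b') * (n1 ^+ 2 + n2 ^+ 2)); first ring.
by rewrite un mulr1.
Qed.

Lemma dotB_chart_tangent z a b a' b' : boundary S z ->
  dotB (chart z a b) (chart z a' b') (unit_tangent z) = a - a'.
Proof.
move=> /unit_normal_sqr; rewrite /chart /dotB /unit_tangent /rot90.
move: (unit_normal z) => [n1 n2] /= un.
transitivity ((a - a') * (n1 ^+ 2 + n2 ^+ 2)); first ring.
by rewrite un mulr1.
Qed.

Lemma unit_normal_le1 z : boundary S z ->
  `|(unit_normal z).1| <= 1 /\ `|(unit_normal z).2| <= 1.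
Proof.
move=> /unit_normal_sqr; move: (unit_normal z) => [n1 n2] /= un.
have := sqr_ge0 n1; have := sqr_ge0 n2 => ? ?.
by split; apply: norm_le_of_sqr_le => //; rewrite expr1n; lra.
Qed.

Lemma boundary_slope z y1 y2 : boundary S z -> boundary S y1 -> boundary S y2 ->
  dist2 y1 z <= 2 * rho ^+ 2 -> dist2 y2 z <= 2 * rho ^+ 2 ->
  dotB y2 y1 (unit_normal z) ^+ 2 <= dotB y2 y1 (unit_tangent z) ^+ 2.
Proof.
move=> Bz B1 B2 y1z y2z; have := boundary_slope_normal Bz B1 B2 y1z y2z.
have -> : dotB y2 y1 (normal z) = r * dotB y2 y1 (unit_normal z).
  by rewrite /dotB /unit_normal /=; field; rewrite gt_eqF.
have -> : dotB y2 y1 (rot90 (normal z)) = r * dotB y2 y1 (unit_tangent z).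
  by rewrite /dotB /unit_tangent /unit_normal /rot90 /=; field; rewrite gt_eqF.
by rewrite !exprMn ler_pM2l // exprn_gt0.
Qed.

Lemma chart_notin z a b : boundary S z -> a ^+ 2 + (b - r) ^+ 2 < r ^+ 2 ->
  ~ S (chart z a b).
Proof.
move=> Bz ab; have [_ vout _] := normalP Bz; apply: vout.
have -> : ((z.1 + (normal z).1, z.2 + (normal z).2) : plane R) = chart z 0 r.
  rewrite /chart /unit_normal /= !mul0r !addr0.
  by apply: injective_projections => /=; field; rewrite gt_eqF.
by rewrite dist2_chart // subr0.
Qed.

Lemma chart_interior z a b : boundary S z -> a ^+ 2 + (b + r) ^+ 2 < r ^+ 2 ->
  S° (chart z a b).
Proof.
move=> Bz ab; have [_ _ vin] := normalP Bz; apply: vin.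
have -> : ((z.1 - (normal z).1, z.2 - (normal z).2) : plane R) = chart z 0 (- r).
  rewrite /chart /unit_normal /= !mul0r !addr0.
  by apply: injective_projections => /=; field; rewrite gt_eqF.
by rewrite dist2_chart // opprK subr0.
Qed.

Lemma dist2_chart_le z a b : boundary S z -> `|a| <= rho -> `|b| <= rho ->
  dist2 (chart z a b) z <= 2 * rho ^+ 2.
Proof.
move=> Bz /sqr_le_of_norm_le a_rho /sqr_le_of_norm_le b_rho.
by rewrite -{2}(chart00 z) dist2_chart // !subr0; lra.
Qed.

Lemma boundary_chart_slope z a1 b1 a2 b2 : boundary S z ->
  `|a1| <= rho -> `|b1| <= rho -> `|a2| <= rho -> `|b2| <= rho ->
  boundary S (chart z a1 b1) -> boundary S (chart z a2 b2) ->
  (b2 - b1) ^+ 2 <= (a2 - a1) ^+ 2.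
Proof.
move=> Bz a1r b1r a2r b2r B1 B2.
have := boundary_slope Bz B1 B2 (dist2_chart_le Bz a1r b1r) (dist2_chart_le Bz a2r b2r).
by rewrite dotB_chart_normal // dotB_chart_tangent.
Qed.

Lemma boundary_chart_unique z a b1 b2 : boundary S z ->
  `|a| <= rho -> `|b1| <= rho -> `|b2| <= rho ->
  boundary S (chart z a b1) -> boundary S (chart z a b2) -> b1 = b2.
Proof.
move=> Bz ar b1r b2r B1 B2.
have := boundary_chart_slope Bz ar b1r ar b2r B1 B2; rewrite subrr expr0n /=.
have := sqr_ge0 (b2 - b1) => ? ?; have /eqP : (b2 - b1) ^+ 2 = 0 by lra.
by rewrite sqrf_eq0 subr_eq0 => /eqP.
Qed.

Lemma chart_bottom_interior z a : boundary S z -> `|a| <= rho -> S° (chart z a (- rho)).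
Proof.
move=> Bz /sqr_le_of_norm_le ar; apply: chart_interior => //.
by have := r0; rewrite /rho in ar *; nra.
Qed.

Lemma chart_top_notin z a : boundary S z -> `|a| <= rho -> ~ S (chart z a rho).
Proof.
move=> Bz /sqr_le_of_norm_le ar; apply: chart_notin => //.
by have := r0; rewrite /rho in ar *; nra.
Qed.

Lemma chart_vertical_lipschitz z a : boundary S z -> forall s t,
  `|(chart z a s).1 - (chart z a t).1| <= 1 * `|s - t| /\
  `|(chart z a s).2 - (chart z a t).2| <= 1 * `|s - t|.
Proof.
move=> /unit_normal_le1 [n1 n2] s t.
have st : forall u v : R, u + s * v - (u + t * v) = (s - t) * v by move=> u v; ring.
by rewrite /chart !st !mul1r; split; rewrite normrM ler_piMr.
Qed.

Lemma chart_horizontal_lipschitz z b : boundary S z -> forall s t,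
  `|(chart z s b).1 - (chart z t b).1| <= 1 * `|s - t| /\
  `|(chart z s b).2 - (chart z t b).2| <= 1 * `|s - t|.
Proof.
move=> /unit_normal_le1 [n1 n2] s t.
have st : forall u v w : R, u + s * v + w - (u + t * v + w) = (s - t) * v.
  by move=> u v w; ring.
rewrite /chart !st /unit_tangent /rot90 /= !mul1r.
by split; rewrite normrM ?normrN ler_piMr.
Qed.

Lemma connected_chart_vertical z a s t : boundary S z ->
  connected ((fun b => chart z a b) @` `[s, t]).
Proof.
by move=> Bz; apply: (@connected_lipschitz_image _ _ 1) => //; exact: chart_vertical_lipschitz.
Qed.

Lemma connected_chart_horizontal z b s t : boundary S z ->
  connected ((fun a => chart z a b) @` `[s, t]).
Proof.
by move=> Bz; apply: (@connected_lipschitz_image _ _ 1) => //;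
  exact: chart_horizontal_lipschitz.
Qed.

Lemma chart_coord_le z y : boundary S z -> dist2 y z <= rho ^+ 2 ->
  `|dotB y z (unit_tangent z)| <= rho /\ `|dotB y z (unit_normal z)| <= rho.
Proof.
move=> Bz yz.
have := dist2_chart (dotB y z (unit_tangent z)) (dotB y z (unit_normal z)) 0 0 Bz.
rewrite -chart_dotB // chart00 !subr0 => e.
have := sqr_ge0 (dotB y z (unit_tangent z)); have := sqr_ge0 (dotB y z (unit_normal z)).
by have := rho_gt0; split; apply: norm_le_of_sqr_le; lra.
Qed.

Lemma exists_boundary_chart z a : boundary S z -> `|a| <= rho ->
  exists2 b, `|b| <= rho & boundary S (chart z a b).
Proof.
move=> Bz ar; have := rho_gt0 => rho0.
have [||y [b /in_itvcc bb <-] Bb] :=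
  connected_meets_boundary cS (@connected_chart_vertical z a (- rho) rho Bz).
- exists (chart z a (- rho)); last exact: interior_subset (chart_bottom_interior Bz ar).
  by exists (- rho) => //; apply/in_itvcc; lra.
- exists (chart z a rho); last exact: chart_top_notin Bz ar.
  by exists rho => //; apply/in_itvcc; lra.
by exists b => //; rewrite ler_norml.
Qed.

Definition graph z (s : R) : R :=
  xget 0 [set b | `|b| <= rho /\ boundary S (chart z (clamp rho s) b)].

Lemma graphP z s : boundary S z ->
  `|graph z s| <= rho /\ boundary S (chart z (clamp rho s) (graph z s)).
Proof.
move=> Bz; have [b br Bb] := exists_boundary_chart Bz (clamp_le s (ltW rho_gt0)).
by rewrite /graph; case: xgetP => // /(_ b (conj br Bb)).
Qed.

Lemma graph_lipschitz z s t : boundary S z -> `|graph z s - graph z t| <= `|s - t|.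
Proof.
move=> Bz; have [gs Bs] := graphP s Bz; have [gt Bt] := graphP t Bz.
have rho0 := ltW rho_gt0.
apply: le_trans (clamp_lipschitz s t rho0).
apply: norm_le_of_sqr_le => //; rewrite real_normK ?num_real //.
exact: boundary_chart_slope Bz (clamp_le t rho0) gt (clamp_le s rho0) gs Bt Bs.
Qed.

Definition graph_path z (s : R) : plane R := chart z (clamp rho s) (graph z s).

Lemma graph_path_chart z s b : boundary S z -> `|s| <= rho -> `|b| <= rho ->
  boundary S (chart z s b) -> graph_path z s = chart z s b.
Proof.
move=> Bz sr br Bb; have [gr Bg] := graphP s Bz; rewrite clamp_id // in Bg.
by rewrite /graph_path clamp_id // (boundary_chart_unique Bz sr gr br Bg Bb).
Qed.

Lemma graph_path_lipschitz z : boundary S z -> forall s t,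
  `|(graph_path z s).1 - (graph_path z t).1| <= 2 * `|s - t| /\
  `|(graph_path z s).2 - (graph_path z t).2| <= 2 * `|s - t|.
Proof.
move=> Bz s t; have [n1 n2] := unit_normal_le1 Bz.
have cst := clamp_lipschitz s t (ltW rho_gt0); have gst := graph_lipschitz s t Bz.
have key (v w : R) : `|v| <= 1 -> `|w| <= 1 ->
    `|(clamp rho s - clamp rho t) * v + (graph z s - graph z t) * w| <= 2 * `|s - t|.
  move=> v1 w1; apply: le_trans (ler_normD _ _) _; rewrite !normrM.
  have := ler_piMr (normr_ge0 (clamp rho s - clamp rho t)) v1.
  have := ler_piMr (normr_ge0 (graph z s - graph z t)) w1; lra.
have st (u v w c c' g g' : R) :
  u + c * v + g * w - (u + c' * v + g' * w) = (c - c') * v + (g - g') * w by ring.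
rewrite /graph_path /chart !st.
by split; apply: key; rewrite // /unit_tangent /rot90 /= normrN.
Qed.

Lemma boundary_component_near z y : boundary S z -> boundary S y ->
  dist2 y z <= rho ^+ 2 -> connected_component (boundary S) z y.
Proof.
move=> Bz By yz; have [ar br] := chart_coord_le Bz yz; have rho0 := rho_gt0.
have ey := chart_dotB y Bz.
set a := dotB y z (unit_tangent z) in ar ey; set b := dotB y z (unit_normal z) in br ey.
have zr : `|0 : R| <= rho by rewrite normr0 ltW.
have C := @connected_lipschitz_image R (graph_path z) 2 (- rho) rho ltac:(lra)
  (graph_path_lipschitz Bz).
apply: (connected_component_max _ _ C).
- exists 0; first by apply/in_itvcc; lra.
  by have := graph_path_chart Bz zr zr; rewrite chart00; apply.
- by move=> _ [s _ <-]; have [] := graphP s Bz.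
exists a; first by apply/in_itvcc; rewrite -ler_norml.
by rewrite ey; apply: graph_path_chart => //; rewrite -ey.
Qed.

(** * Components of the complement of the boundary *)

Local Notation off_boundary := (~` boundary S).

Lemma interior_off_boundary y : S° y -> off_boundary y.
Proof. by move=> iSy /(boundary_closedE y cS) []. Qed.

Lemma notin_off_boundary y : ~ S y -> off_boundary y.
Proof. by move=> nSy /boundary_in. Qed.

Lemma connected_off_boundary_side C y1 y2 : connected C -> C `<=` off_boundary ->
  C y1 -> C y2 -> S y1 -> ~ S y2 -> False.
Proof.
move=> cC CB Cy1 Cy2 Sy1 nSy2.
have [y Cy By] := connected_meets_boundary cS cC (ex_intro2 _ _ y1 Cy1 Sy1)
  (ex_intro2 _ _ y2 Cy2 nSy2).
exact: CB _ Cy By.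
Qed.

Lemma off_boundary_component_edge z a b e lo hi : boundary S z -> `|a| <= rho ->
  lo <= b <= hi -> lo <= e <= hi ->
  (forall t, `|t| <= rho -> off_boundary (chart z t e)) ->
  (forall t, lo <= t <= hi -> off_boundary (chart z a t)) ->
  connected_component off_boundary (chart z 0 e) (chart z a b).
Proof.
move=> Bz ar bI eI edge seg; have rho0 := rho_gt0.
pose V := (fun t => chart z a t) @` `[lo, hi].
pose H := (fun t => chart z t e) @` `[- rho, rho].
have VH : connected (V `|` H).
  apply: connectedU; last exact: connected_chart_horizontal.
    exists (chart z a e); split; first by exists e => //; apply/in_itvcc.
    by exists a => //; apply/in_itvcc; rewrite -ler_norml.
  exact: connected_chart_vertical.
apply: (connected_component_max _ _ VH).
- by right; exists 0 => //; apply/in_itvcc; lra.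
- move=> _ [[t /in_itvcc tI <-] | [t /in_itvcc tI <-]]; first exact: seg.
  by apply: edge; rewrite ler_norml.
by left; exists b => //; apply/in_itvcc.
Qed.

Lemma off_boundary_chart_component z a b : boundary S z ->
  `|a| <= rho -> `|b| <= rho -> off_boundary (chart z a b) ->
  connected_component off_boundary (chart z 0 (- rho)) (chart z a b) \/
  connected_component off_boundary (chart z 0 rho) (chart z a b).
Proof.
move=> Bz ar br nBab; have rho0 := rho_gt0; move: (br); rewrite ler_norml => /andP[b1 b2].
have [[t1 /andP[t11 t12] Bt1] | below] :=
  pselect (exists2 t, - rho <= t <= b & boundary S (chart z a t)).
  right; apply: (off_boundary_component_edge (lo := b) (hi := rho)) => //.
  - by apply/andP; split; lra.
  - by apply/andP; split; lra.
  - by move=> t tr; apply/notin_off_boundary/chart_top_notin.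
  move=> t /andP[bt trho] Bt.
  have t1r : `|t1| <= rho by rewrite ler_norml; apply/andP; split; lra.
  have tr : `|t| <= rho by rewrite ler_norml; apply/andP; split; lra.
  have e := boundary_chart_unique Bz ar t1r tr Bt1 Bt.
  by apply: nBab; rewrite (_ : b = t) //; lra.
left; apply: (off_boundary_component_edge (lo := - rho) (hi := b)) => //.
- by apply/andP; split; lra.
- by apply/andP; split; lra.
- by move=> t tr; apply/interior_off_boundary/chart_bottom_interior.
by move=> t tI Bt; apply: below; exists t.
Qed.

Definition inner_component z := connected_component off_boundary (chart z 0 (- rho)).
Definition outer_component z := connected_component off_boundary (chart z 0 rho).

Lemma off_boundary_component_near z p : boundary S z -> off_boundary p ->
  dist2 p z <= rho ^+ 2 ->
  connected_component off_boundary p = inner_component z \/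
  connected_component off_boundary p = outer_component z.
Proof.
move=> Bz nBp pz; have [ar br] := chart_coord_le Bz pz.
rewrite (chart_dotB p Bz) in nBp *.
by case: (off_boundary_chart_component Bz ar br nBp) => e; [left | right];
  apply/esym/same_connected_component.
Qed.

Lemma inner_component_near z z' : boundary S z -> boundary S z' ->
  dist2 z' z <= rho ^+ 2 / 16 -> inner_component z = inner_component z'.
Proof.
move=> Bz Bz' zz'; have rho0 := rho_gt0; have r8 : r = 8 * rho by rewrite /rho; field.
pose q := chart z' 0 (- (rho / 2)).
have iq : S° q by apply: chart_interior => //; rewrite r8; nra.
have z'q : inner_component z' q.
  have V := @connected_chart_vertical z' 0 (- rho) (- (rho / 2)) Bz'.
  apply: (connected_component_max _ _ V).
  - by exists (- rho) => //; apply/in_itvcc; lra.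
  - move=> _ [t /in_itvcc tI <-]; apply/interior_off_boundary/chart_interior => //.
    by rewrite r8; move: tI => /andP[? ?]; nra.
  - by exists (- (rho / 2)) => //; apply/in_itvcc; lra.
have qz : dist2 q z <= rho ^+ 2.
  have qz' : dist2 q z' = rho ^+ 2 / 4.
    by rewrite -[X in dist2 _ X](chart00 z') dist2_chart //; field.
  have := dist2_triangle q z' z; have := sqr_ge0 rho; lra.
have [e|e] := off_boundary_component_near Bz (interior_off_boundary iq) qz.
  by rewrite -e /inner_component (same_connected_component z'q).
have zr : `|0 : R| <= rho by rewrite normr0 ltW.
exfalso; apply: (@connected_off_boundary_side (outer_component z) q (chart z 0 rho)).
- exact: component_connected.
- exact: connected_component_sub.
- by rewrite -e; apply/connected_component_refl/interior_off_boundary.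
- by apply/connected_component_refl/notin_off_boundary/chart_top_notin.
- exact: interior_subset.
exact: chart_top_notin.
Qed.

Lemma outer_component_near z z' : boundary S z -> boundary S z' ->
  dist2 z' z <= rho ^+ 2 / 16 -> outer_component z = outer_component z'.
Proof.
move=> Bz Bz' zz'; have rho0 := rho_gt0; have r8 : r = 8 * rho by rewrite /rho; field.
pose q := chart z' 0 (rho / 2).
have nSq : ~ S q by apply: chart_notin => //; rewrite r8; nra.
have z'q : outer_component z' q.
  have V := @connected_chart_vertical z' 0 (rho / 2) rho Bz'.
  apply: (connected_component_max _ _ V).
  - by exists rho => //; apply/in_itvcc; lra.
  - move=> _ [t /in_itvcc tI <-]; apply/notin_off_boundary/chart_notin => //.
    by rewrite r8; move: tI => /andP[? ?]; nra.
  - by exists (rho / 2) => //; apply/in_itvcc; lra.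
have qz : dist2 q z <= rho ^+ 2.
  have qz' : dist2 q z' = rho ^+ 2 / 4.
    by rewrite -[X in dist2 _ X](chart00 z') dist2_chart //; field.
  have := dist2_triangle q z' z; have := sqr_ge0 rho; lra.
have [e|e] := off_boundary_component_near Bz (notin_off_boundary nSq) qz; last first.
  by rewrite -e /outer_component (same_connected_component z'q).
have zr : `|0 : R| <= rho by rewrite normr0 ltW.
exfalso; apply: (@connected_off_boundary_side (inner_component z) (chart z 0 (- rho)) q).
- exact: component_connected.
- exact: connected_component_sub.
- by apply/connected_component_refl/interior_off_boundary/chart_bottom_interior.
- by rewrite -e; apply/connected_component_refl/notin_off_boundary.
- exact: interior_subset (chart_bottom_interior Bz zr).
exact: nSq.
Qed.

Definition hray x (t : R) : plane R := (x.1 + t, x.2).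

Lemma hray0 x : hray x 0 = x.
Proof. by rewrite /hray addr0; case: x. Qed.

Lemma connected_hray x a b : connected (hray x @` `[a, b]).
Proof.
apply: (@connected_lipschitz_image _ _ 1) => // s t.
by rewrite /hray /= subrr normr0 mul1r (_ : _ - _ = s - t) //; ring.
Qed.

Lemma bounded_component_near_boundary x : off_boundary x ->
  bounded_plane (connected_component off_boundary x) ->
  exists z p, [/\ boundary S z, connected_component off_boundary x p
                & dist2 p z <= rho ^+ 2].
Proof.
move=> nBx [M xM]; have rho0 := rho_gt0.
pose T := `|M| + `|x.1| + 1.
have T0 : 0 < T by rewrite /T; have := normr_ge0 M; have := normr_ge0 x.1; lra.
have xT : ~ connected_component off_boundary x (hray x T).
  move=> /xM; apply/negP; rewrite -ltNge.
  apply: lt_le_trans (norm_sub1_le_eucl _ _); rewrite /hray /= sub0r normrN /T.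
  have := ler_norm M; have := ler_norm (- x.1); rewrite normrN.
  have := ler_norm (x.1 + (`|M| + `|x.1| + 1)); lra.
have hit : exists2 t, 0 <= t & boundary S (hray x t).
  apply: contrapT => noB; apply: xT.
  apply: (connected_component_max _ _ (@connected_hray x 0 T)).
  - by exists 0; [apply/in_itvcc; lra | exact: hray0].
  - by move=> _ [t /in_itvcc /andP[t0 _] <-] Bt; apply: noB; exists t.
  - by exists T => //; apply/in_itvcc; lra.
have rho2 : 0 < rho / 2 by rewrite divr_gt0.
have nB0 : ~ boundary S (hray x 0) by rewrite hray0.
have [t0 [t1 [t00 t01 t10 Bt1 noB]]] := near_first_hit rho2 nB0 hit.
exists (hray x t1), (hray x t0); split => //.
  apply: (connected_component_max _ _ (@connected_hray x 0 t0)).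
  - by exists 0; [apply/in_itvcc; lra | exact: hray0].
  - by move=> _ [t /in_itvcc tI <-]; exact: noB.
  - by exists t0 => //; apply/in_itvcc; lra.
rewrite /dist2 /hray /= subrr expr0n /= addr0; apply: sqr_le_of_norm_le.
by rewrite distrC ger0_norm; lra.
Qed.

(** * Counting components and covering the boundary *)

Variable d : R.
Hypothesis dS : diam S = d%:E.

Let N := ncells `|d| (r / 64).

Lemma S_neq0 : S !=set0.
Proof.
apply: contrapT => /set0P/negP; rewrite negbK => /eqP S0.
by move: dS; rewrite S0 diam_set0.
Qed.

Let p0 : plane R := xget (0, 0) S.

Lemma S_p0 : S p0.
Proof. by rewrite /p0; case: xgetP => //; have [p Sp] := S_neq0 => /(_ p). Qed.

Lemma S_coord_le y : S y -> `|y.1 - p0.1| <= `|d| /\ `|y.2 - p0.2| <= `|d|.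
Proof.
move=> Sy; have p0y : eucl p0 y <= `|d|.
  apply: le_trans (ler_norm d); rewrite -lee_fin -dS.
  by apply: ereal_sup_ubound; exists p0; [exact: S_p0 | exists y].
rewrite !(distrC _ p0.1) !(distrC _ p0.2).
by rewrite !(le_trans _ p0y) ?norm_sub1_le_eucl ?norm_sub2_le_eucl.
Qed.

Definition cell_code y : nat :=
  cell `|d| (r / 64) (y.1 - p0.1) * N + cell `|d| (r / 64) (y.2 - p0.2).

Lemma cell_code_lt y : S y -> (cell_code y < N * N)%N.
Proof.
have r64 : 0 < r / 64 by rewrite divr_gt0.
move=> /S_coord_le [/(cell_lt r64) y1 /(cell_lt r64) y2]; rewrite /cell_code -/N.
apply: (@leq_trans (cell `|d| (r / 64) (y.1 - p0.1) * N + N)); first by rewrite ltn_add2l.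
by rewrite -mulSnr leq_mul2r y1 orbT.
Qed.

Lemma cell_code_eq_dist2 y y' : S y -> S y' -> cell_code y = cell_code y' ->
  dist2 y y' <= rho ^+ 2 / 16.
Proof.
have r64 : 0 < r / 64 by rewrite divr_gt0.
move=> /S_coord_le [y1 y2] /S_coord_le [y'1 y'2] /eq_mixed_radix[]; try exact: cell_lt.
move=> /(cell_eq_dist r64 y1 y'1) e1 /(cell_eq_dist r64 y2 y'2) e2.
rewrite (_ : _ - _ - _ = y.1 - y'.1) in e1; last by ring.
rewrite (_ : _ - _ - _ = y.2 - y'.2) in e2; last by ring.
have r64rho : (r / 64) ^+ 2 = rho ^+ 2 / 64 by rewrite /rho; field.
have := sqr_le_of_norm_le (ltW e1); have := sqr_le_of_norm_le (ltW e2).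
by rewrite /dist2 r64rho; have := sqr_ge0 rho; lra.
Qed.

Definition boundary_rep (C : set (plane R)) : plane R :=
  xget p0 [set x | boundary S x /\ C = connected_component (boundary S) x].

Lemma boundary_repP C x : boundary S x -> C = connected_component (boundary S) x ->
  boundary S (boundary_rep C) /\ C = connected_component (boundary S) (boundary_rep C).
Proof. by move=> Bx eC; rewrite /boundary_rep; case: xgetP => // /(_ x (conj Bx eC)). Qed.

Lemma boundary_components_card : exists n,
  [set connected_component (boundary S) x | x in boundary S] #= `I_n /\ (n <= N * N)%N.
Proof.
apply: (@card_II_le_of_inj _ _ (fun C => cell_code (boundary_rep C))).
  move=> C [x Bx eC]; have [B _] := boundary_repP Bx (esym eC).
  exact/cell_code_lt/boundary_in.
move=> C C' [x Bx eC] [x' Bx' eC'] codes.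
have [B e] := boundary_repP Bx (esym eC); have [B' e'] := boundary_repP Bx' (esym eC').
rewrite e e'; apply/same_connected_component/boundary_component_near => //.
have := cell_code_eq_dist2 (boundary_in B') (boundary_in B) (esym codes).
by have := sqr_ge0 rho; lra.
Qed.

Definition component_rep (C : set (plane R)) : plane R :=
  xget p0 [set z | boundary S z /\ (C = inner_component z \/ C = outer_component z)].

Lemma component_repP C x : off_boundary x -> C = connected_component off_boundary x ->
  bounded_plane C -> boundary S (component_rep C) /\
  (C = inner_component (component_rep C) \/ C = outer_component (component_rep C)).
Proof.
move=> nBx eC bC; rewrite eC in bC.
have [z [p [Bz xp pz]]] := bounded_component_near_boundary nBx bC.
rewrite /component_rep; case: xgetP => // /(_ z) nz; exfalso; apply: nz; split => //.
rewrite eC (same_connected_component xp).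
exact: off_boundary_component_near Bz (connected_component_sub xp) pz.
Qed.

Definition component_side (C : set (plane R)) : nat :=
  if pselect (C = inner_component (component_rep C)) then 0 else 1.

Lemma component_side_lt C : (component_side C < 2)%N.
Proof. by rewrite /component_side; case: pselect. Qed.

Lemma bounded_components_card : exists m,
  [set C | exists2 x, off_boundary x &
             C = connected_component off_boundary x /\ bounded_plane C] #= `I_m
  /\ (m <= N * N * 2)%N.
Proof.
apply: (@card_II_le_of_inj _ _
  (fun C => cell_code (component_rep C) * 2 + component_side C)%N).
  move=> C [x nBx [eC bC]]; have [B _] := component_repP nBx eC bC.
  apply: (@leq_trans (cell_code (component_rep C) * 2 + 2)).
    by rewrite ltn_add2l component_side_lt.
  by rewrite -mulSnr leq_mul2r (cell_code_lt (boundary_in B)) orbT.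
move=> C C' [x nBx [eC bC]] [x' nBx' [eC' bC']] codes.
have [B sides] := component_repP nBx eC bC; have [B' sides'] := component_repP nBx' eC' bC'.
have [{}codes eside] := eq_mixed_radix (component_side_lt C) (component_side_lt C') codes.
have zz' := cell_code_eq_dist2 (boundary_in B') (boundary_in B) (esym codes).
move: eside; rewrite /component_side; case: pselect => i; case: pselect => i' // _.
  by rewrite i i'; exact: inner_component_near.
have o : C = outer_component (component_rep C) by case: sides.
have o' : C' = outer_component (component_rep C') by case: sides'.
by rewrite o o'; exact: outer_component_near.
Qed.

Lemma euler_char_boundary_le :
  exists e : int, euler_char (boundary S) e /\ `|e|%:~R <= (3 * (N * N))%:R :> R.
Proof.
have [n [cn nN]] := boundary_components_card; have [m [cm mN]] := bounded_components_card.
exists (n%:Z - m%:Z); split; first by exists n, m.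
rewrite intr_norm intrB; apply: le_trans (ler_normB _ _) _.
by rewrite !normr_nat -natrD ler_nat; move: nN mN; clear; lia.
Qed.

Definition cell_center (c : nat) : plane R :=
  xget p0 [set x | boundary S x /\ cell_code x = c].

Lemma cell_centerP y : boundary S y ->
  boundary S (cell_center (cell_code y)) /\ dist2 y (cell_center (cell_code y)) <= rho ^+ 2.
Proof.
move=> By; rewrite /cell_center; case: xgetP => [x -> [Bx cx] | /(_ y (conj By erefl))] //.
split=> //; have := cell_code_eq_dist2 (boundary_in By) (boundary_in Bx) (esym cx).
by have := sqr_ge0 rho; lra.
Qed.

Definition tangent_coord y : R :=
  dotB y (cell_center (cell_code y)) (unit_tangent (cell_center (cell_code y))).

Lemma tangent_coord_le y : boundary S y -> `|tangent_coord y| <= rho.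
Proof. by move=> /cell_centerP [Bx yx]; have [] := chart_coord_le Bx yx. Qed.

Lemma eucl_same_cell_le y y' (q : R) : 0 <= q -> boundary S y -> boundary S y' ->
  cell_code y = cell_code y' -> `|tangent_coord y - tangent_coord y'| <= q ->
  eucl y y' <= 2 * q.
Proof.
move=> q0 By By' cyy'; have [Bx yx] := cell_centerP By; have [_ y'x] := cell_centerP By'.
rewrite /tangent_coord -cyy' in y'x *; set x := cell_center _ in Bx yx y'x *.
have [ar br] := chart_coord_le Bx yx; have [ar' br'] := chart_coord_le Bx y'x.
have ey := chart_dotB y Bx; have ey' := chart_dotB y' Bx.
set a := dotB y x _ in ar ey *; set b := dotB y x _ in br ey.
set a' := dotB y' x _ in ar' ey' *; set b' := dotB y' x _ in br' ey'.
move=> /sqr_le_of_norm_le aa'.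
have bb' : (b' - b) ^+ 2 <= (a' - a) ^+ 2.
  by apply: (boundary_chart_slope Bx) => //; rewrite -?ey -?ey'.
rewrite eucl_leE ?mulr_ge0 // ey ey' dist2_chart //.
rewrite (_ : (a' - a) ^+ 2 = (a - a') ^+ 2) in bb'; last by ring.
rewrite (_ : (b' - b) ^+ 2 = (b - b') ^+ 2) in bb'; last by ring.
by have := sqr_ge0 q; rewrite exprMn; lra.
Qed.

Definition slot (m : nat) y : R := (tangent_coord y + rho) * m%:R / (2 * rho).

Definition piece (m k : nat) : set (plane R) :=
  [set y | [/\ boundary S y, cell_code y = (k %/ m)%N
             & (k %% m)%:R <= slot m y <= (k %% m).+1%:R]].

Lemma diam_piece_le m k : (0 < m)%N -> (diam (piece m k) <= (4 * rho / m%:R)%:E)%E.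
Proof.
move=> m0; have rho0 := rho_gt0; have m_gt0 : 0 < m%:R :> R by rewrite ltr0n.
apply: ge_ereal_sup => _ [y [By cy /andP[s1 s2]] [y' [By' cy' /andP[s1' s2']] <-]].
rewrite lee_fin (_ : 4 * rho / m%:R = 2 * (2 * rho / m%:R)); last by field; rewrite gt_eqF.
apply: eucl_same_cell_le => //; first by rewrite divr_ge0 ?mulr_ge0 ?ltW.
  by rewrite cy cy'.
have rho2 : 0 < 2 * rho by lra.
move: s1 s2 s1' s2'; rewrite /slot -[(k %% m).+1%:R]natr1; move: (k %% m)%:R => j.
rewrite !ler_pdivlMr // !ler_pdivrMr // => s1 s2 s1' s2'.
rewrite -(ger0_norm (ltW m_gt0)) -normrM ler_norml.
by apply/andP; split; lra.
Qed.

Lemma piece_cover m : (0 < m)%N -> boundary S `<=` \bigcup_k piece m k.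
Proof.
move=> m0 y By; have rho0 := rho_gt0; have m_gt0 : 0 < m%:R :> R by rewrite ltr0n.
move: (tangent_coord_le By); rewrite ler_norml => /andP[t1 t2].
have s0 : 0 <= slot m y.
  by apply: divr_ge0; [apply: mulr_ge0; [lra | exact: ler0n] | lra].
have sm : slot m y <= m%:R.
  by rewrite /slot ler_pdivrMr ?mulr_gt0 // mulrC ler_wpM2l //; lra.
pose j := minn (Num.truncn (slot m y)) m.-1.
have jm : (j < m)%N by rewrite /j; lia.
exists (cell_code y * m + j)%N => //.
rewrite /piece /= divnMDl // divn_small // addn0 modnMDl modn_small //; split => //.
rewrite /j; case: (leqP (Num.truncn (slot m y)) m.-1) => jt.
  by have /andP[-> /ltW ->] := truncn_itv s0.
rewrite prednK // sm andbT.
apply: (@le_trans _ _ (Num.truncn (slot m y))%:R); last by rewrite truncn_le.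
by rewrite ler_nat ltnW.
Qed.

Lemma piece_eq0 m k : (0 < m)%N -> (N * N * m <= k)%N -> piece m k = set0.
Proof.
move=> m0 Nk; apply/seteqP; split => // y [By cy _].
have := cell_code_lt (boundary_in By); rewrite cy ltnNge leq_divRL //.
by rewrite Nk.
Qed.

Lemma hausdorff1_boundary_le : (hausdorff1 (boundary S) <= (4 * rho * (N * N)%:R)%:E)%E.
Proof.
apply: ge_ereal_sup => _ [del /= del0 <-]; have rho0 := rho_gt0.
pose m := (Num.truncn (4 * rho / del)).+1.
have m_gt0 : 0 < m%:R :> R by rewrite ltr0n.
have mdel : 4 * rho / m%:R < del.
  have d0 : 0 <= 4 * rho / del by rewrite divr_ge0 //; lra.
  have /andP[_ dm] := truncn_itv d0; rewrite -/m ltr_pdivrMr // in dm.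
  by rewrite ltr_pdivrMr // (mulrC del).
apply: le_trans (ereal_inf_lbound _) _.
  exists (piece m); split => [|k]; first exact: piece_cover.
  by apply: le_trans (diam_piece_le k _) _; rewrite // lee_fin ltW.
apply: le_trans (@nneseries_le_finite _ _ (N * N * m) (4 * rho / m%:R) _ _ _) _.
- by move=> k; rewrite le_max lexx.
- by move=> k Nk; rewrite piece_eq0 // diam_set0 maxeNy.
- by move=> k; rewrite ge_max diam_piece_le // lee_fin divr_ge0 ?ltW //; lra.
by rewrite lee_fin natrM le_eqVlt; apply/orP; left; apply/eqP; field; rewrite gt_eqF.
Qed.

End RollingBoundary.

Theorem lemma3 (R : realType) (r d : R) : 0 < r ->
  exists A0 A1 : R, 0 < A0 /\ 0 < A1 /\
    forall S : set (R * R),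
      compact S -> rolling r S -> rolling r (~` S) -> diam S = d%:E ->
      (exists e : int, euler_char (boundary S) e /\ (`|e|%:~R <= A0)) /\
      (hausdorff1 (boundary S) <= A1%:E)%E.
Proof.
move=> r0; pose N := ncells `|d| (r / 64).
exists ((3 * (N * N))%:R + 1), (4 * (r / 8) * (N * N)%:R + 1).
split; first by rewrite ltr_pwDr.
split; first by rewrite ltr_pwDr // !mulr_ge0 ?divr_ge0 // ltW.
move=> S cpS rS rSc dS; have cS : closed S := compact_closed (@norm_hausdorff _ _) cpS.
split.
  have [e [Ee eN]] := euler_char_boundary_le r0 cS rS rSc dS.
  by exists e; split => //; rewrite (le_trans eN) // lerDl.
apply: le_trans (hausdorff1_boundary_le r0 cS rS rSc dS) _.
by rewrite lee_fin lerDl.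
Qed.
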